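(* Let $i,j\in\mathbb{Z}^2$ be distinct and let $H$ be a finite DAG (finitely many nodes) containing $i$ and $j$ with $\mathrm{An}_H(i)\cap\mathrm{An}_H(j)=\emptyset$. Then $p_{c,2,\mathcal{P},H}=1$.
   Context: Oriented square lattice: node set $\mathbb{Z}^2$, with a directed edge $u\to v$ if and only if $v-u\in\{(1,0),(0,1)\}$; $E(\mathbb{Z}^2)$ denotes this edge set. A DAG $H$ here has $V(H)\subset\mathbb{Z}^2$ and $E(H)\subset E(\mathbb{Z}^2)$; $\mathrm{An}_H(u)$ is $u$ together with all nodes having a directed path to $u$ in $H$. Bernoulli bond percolation with parameter $p$: each edge of $E(\mathbb{Z}^2)$ is independently open with probability $p$; $P_p$ is the product measure. $C(k)$ is the set of nodes joined to $k$ by a path of open edges (orientation ignored), with those open edges. Enlargement $U(H)$: the random DAG with node set $\bigcup_{k\in V(H)}V(C(k))$ and edge set $E(H)\cup\bigcup_{k\in V(H)}E(C(k))$; equivalently, percolation under the measure $P_p^H$ on $\{0,1\}^{E(\mathbb{Z}^2)}$ in which edges of $E(H)$ are open with probability $1$ and all other edges independently open with probability $p$. $U(H)\in\mathcal{P}$ means $\mathrm{An}(i)\cap\mathrm{An}(j)\neq\emptyset$ in $U(H)$ (ancestors via directed open paths). Critical probability: $p_{c,2,\mathcal{P},H}=\inf\{p\in[0,1]: P_p(U(H)\in\mathcal{P})=1\}$. *)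

From Stdlib Require Import Reals ZArith List ClassicalEpsilon.
Import ListNotations.
Open Scope R_scope.

Definition node : Type := (Z * Z)%type.
Definition edge : Type := (node * node)%type.

Definition lattice_edge (e : edge) : Prop :=
  let '((a, b), (c, d)) := e in
  (c = a + 1 /\ d = b)%Z \/ (c = a /\ d = b + 1)%Z.

Definition edge_eq_dec (e e' : edge) : {e = e'} + {e <> e'}.
Proof. repeat decide equality; apply Z.eq_dec. Defined.

Inductive reach (ok : edge -> Prop) : node -> node -> Prop :=
| reach_refl : forall u, reach ok u u
| reach_step : forall u w t, lattice_edge (u, w) -> ok (u, w) -> reach ok w t -> reach ok u t.

Definition in_box (n : nat) (u : node) : Prop :=
  (- Z.of_nat n <= fst u <= Z.of_nat n)%Z /\ (- Z.of_nat n <= snd u <= Z.of_nat n)%Z.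

Definition zrange (n : nat) : list Z :=
  map (fun k => (Z.of_nat k - Z.of_nat n)%Z) (seq 0 (2 * n + 1)).

Definition box_nodes (n : nat) : list node := list_prod (zrange n) (zrange n).

Definition box_edges (n : nat) : list edge :=
  flat_map (fun u =>
     let '(a, b) := u in
     [ (u, ((a + 1)%Z, b)); (u, (a, (b + 1)%Z)) ]) (box_nodes n).

(** Configurations: omega : edge -> bool (true = open). *)
Definition upd (w : edge -> bool) (e : edge) (b : bool) : edge -> bool :=
  fun e' => if edge_eq_dec e' e then b else w e'.

Definition indicator (P : Prop) : R :=
  if excluded_middle_informative P then 1 else 0.

(** Probability, under independent Bernoulli(p) states of the edges in [l]
    (all other edges taking their value in [w]), of the event [A]. *)
Fixpoint cyl_prob (p : R) (l : list edge) (w : edge -> bool)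
         (A : (edge -> bool) -> Prop) : R :=
  match l with
  | [] => indicator (A w)
  | e :: l' => p * cyl_prob p l' (upd w e true) A
               + (1 - p) * cyl_prob p l' (upd w e false) A
  end.

(** Under P_p^H, edge e is open iff it is in E(H) or its Bernoulli state is open. *)
Definition openH (EH : list edge) (w : edge -> bool) (e : edge) : Prop :=
  In e EH \/ w e = true.

Definition event_box (EH : list edge) (i j : node) (n : nat) (w : edge -> bool) : Prop :=
  exists v,
    reach (fun e => openH EH w e /\ in_box n (fst e) /\ in_box n (snd e)) v i /\
    reach (fun e => openH EH w e /\ in_box n (fst e) /\ in_box n (snd e)) v j.

(** P_p(U(H) in P) is the supremum of the increasing cylinder probabilities
    P_p^H(E_n) (continuity of the product measure from below, since the event
    {An(i) cap An(j) <> empty} is the increasing union of the E_n). *)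
Definition probP_is (p : R) (EH : list edge) (i j : node) (r : R) : Prop :=
  is_lub (fun x => exists n : nat,
            x = cyl_prob p (box_edges n) (fun _ => false) (event_box EH i j n)) r.

Definition pc_is (EH : list edge) (i j : node) (x : R) : Prop :=
  (forall p, 0 <= p <= 1 -> probP_is p EH i j 1 -> x <= p) /\
  (forall y, (forall p, 0 <= p <= 1 -> probP_is p EH i j 1 -> y <= p) -> y <= x).

(* If p < 1, then with probability at least (1-p)^m, where m bounds the number of
   lattice edges entering V(H), all those edges are closed.  An open directed path
   ending at i or j can then only use edges of H, so i and j would have a common
   ancestor in H itself, which is excluded.  Hence P_p(U(H) in P) <= 1 - (1-p)^m < 1
   for every p < 1, while at p = 1 every box is fully open and the south-west corner
   of i and j is a common ancestor. *)
From Stdlib Require Import Reals ZArith List Lia Lra Psatz ClassicalEpsilon.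
Import ListNotations.
Open Scope R_scope.

Lemma pow_le_one (x : R) k : 0 <= x <= 1 -> x ^ k <= 1.
Proof. intros Hx; induction k; simpl; nra. Qed.

Lemma pow_le_pow_le_one (x : R) m n : 0 <= x <= 1 -> (m <= n)%nat -> x ^ n <= x ^ m.
Proof.
  intros Hx Hmn. replace n with (m + (n - m))%nat by lia. rewrite pow_add.
  pose proof (pow_le x m ltac:(lra)). pose proof (pow_le x (n - m) ltac:(lra)).
  pose proof (pow_le_one x (n - m) Hx). nra.
Qed.

Lemma cyl_prob_compl p l w (A : (edge -> bool) -> Prop) :
  cyl_prob p l w A + cyl_prob p l w (fun w' => ~ A w') = 1.
Proof.
  revert w; induction l as [|e l IH]; intros w; simpl.
  - unfold indicator; do 2 destruct excluded_middle_informative; tauto || lra.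
  - pose proof (IH (upd w e true)); pose proof (IH (upd w e false)); nra.
Qed.

Lemma cyl_prob_one l w (A : (edge -> bool) -> Prop) :
  (forall w', (forall e, In e l -> w' e = true) -> (forall e, ~ In e l -> w' e = w e) -> A w') ->
  cyl_prob 1 l w A = 1.
Proof.
  revert w; induction l as [|a l IH]; intros w HA; simpl.
  - unfold indicator; destruct excluded_middle_informative as [|nA]; auto.
    exfalso; apply nA, HA; [intros _ []|reflexivity].
  - rewrite IH; [ring|]. intros w' Hl Hout. apply HA.
    + intros e [<-|He]; auto. destruct (in_dec edge_eq_dec a l); auto.
      rewrite Hout by assumption. unfold upd; destruct edge_eq_dec; congruence.
    + intros e He. rewrite Hout by (intro; apply He; right; assumption).
      unfold upd; destruct edge_eq_dec; [subst; exfalso; apply He; left|]; auto.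
Qed.

Definition all_closed (L : list edge) (w : edge -> bool) : Prop :=
  forall e, In e L -> w e = false.

Section Bernoulli.

Variable p : R.
Hypothesis Hp : 0 <= p <= 1.

Lemma cyl_prob_bounds l w A : 0 <= cyl_prob p l w A <= 1.
Proof.
  revert w; induction l as [|e l IH]; intros w; simpl.
  - unfold indicator; destruct excluded_middle_informative; lra.
  - pose proof (IH (upd w e true)); pose proof (IH (upd w e false)); nra.
Qed.

Lemma cyl_prob_le l w (A B : (edge -> bool) -> Prop) :
  (forall w', A w' -> B w') -> cyl_prob p l w A <= cyl_prob p l w B.
Proof.
  intros AB; revert w; induction l as [|e l IH]; intros w; simpl.
  - unfold indicator; do 2 destruct excluded_middle_informative; try lra.
    exfalso; auto.
  - pose proof (IH (upd w e true)); pose proof (IH (upd w e false)); nra.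
Qed.

(* [l] may repeat edges, so each edge of [L] is charged a factor [1 - p] only at its
   last occurrence in [l]; [M] keeps count of the edges still to be charged. *)
Lemma cyl_prob_all_closed_ge L l w M :
  (forall e, In e L -> ~ In e l -> w e = false) ->
  (forall e, In e L -> In e l -> In e M) ->
  (1 - p) ^ length M <= cyl_prob p l w (all_closed L).
Proof.
  revert w M; induction l as [|e l IH]; intros w M Hw HM; simpl.
  - unfold indicator; destruct excluded_middle_informative as [_|nclosed].
    + apply pow_le_one; lra.
    + exfalso; apply nclosed; intros e He; apply Hw; auto.
  - assert (Hupd : forall b, b = false \/ In e l \/ ~ In e L ->
              forall e', In e' L -> ~ In e' l -> upd w e b e' = false).
    { intros b Hb e' He' Hl. unfold upd; destruct edge_eq_dec as [->|ne].
      - tauto.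
      - apply Hw; [assumption|intros [->|]; tauto]. }
    pose proof (cyl_prob_bounds l (upd w e true) (all_closed L)).
    destruct (in_dec edge_eq_dec e L) as [eL|eL];
      [destruct (in_dec edge_eq_dec e l) as [el|el]|].
    2: {
      assert (Hlen := remove_length_lt edge_eq_dec M e (HM e eL (or_introl eq_refl))).
      assert (IHfalse : (1 - p) ^ length (remove edge_eq_dec e M)
                        <= cyl_prob p l (upd w e false) (all_closed L)).
      { apply IH; [apply Hupd; tauto|].
        intros e' He' Hl. apply in_in_remove; [intros ->; tauto|apply HM; simpl; auto]. }
      pose proof (pow_le_pow_le_one (1 - p) _ _ ltac:(lra) Hlen). simpl in *. nra. }
    all: assert (IHtrue : (1 - p) ^ length M <= cyl_prob p l (upd w e true) (all_closed L))
           by (apply IH; [apply Hupd; tauto|intros; apply HM; simpl; auto]).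
    all: assert (IHfalse : (1 - p) ^ length M <= cyl_prob p l (upd w e false) (all_closed L))
           by (apply IH; [apply Hupd; tauto|intros; apply HM; simpl; auto]).
    all: nra.
Qed.

Lemma cyl_prob_avoid_all_closed_le L l (A : (edge -> bool) -> Prop) :
  (forall w, A w -> ~ all_closed L w) ->
  cyl_prob p l (fun _ => false) A <= 1 - (1 - p) ^ length L.
Proof.
  intros HA.
  pose proof (cyl_prob_le l (fun _ => false) _ _ HA).
  pose proof (cyl_prob_compl p l (fun _ => false) (all_closed L)).
  pose proof (cyl_prob_all_closed_ge L l (fun _ => false) L
                ltac:(reflexivity) ltac:(auto)).
  lra.
Qed.

End Bernoulli.

Lemma reach_trans ok u v t : reach ok u v -> reach ok v t -> reach ok u t.
Proof. induction 1; intros; auto. eapply reach_step; eauto. Qed.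

Lemma reach_right (ok : edge -> Prop) k a b :
  (forall x, (a <= x < a + Z.of_nat k)%Z -> ok ((x, b), ((x + 1)%Z, b))) ->
  reach ok (a, b) ((a + Z.of_nat k)%Z, b).
Proof.
  revert a; induction k as [|k IH]; intros a Hok.
  - rewrite Z.add_0_r; constructor.
  - apply reach_step with ((a + 1)%Z, b); [simpl; auto|apply Hok; lia|].
    replace (a + Z.of_nat (S k))%Z with (a + 1 + Z.of_nat k)%Z by lia.
    apply IH; intros x Hx; apply Hok; lia.
Qed.

Lemma reach_up (ok : edge -> Prop) k a b :
  (forall y, (b <= y < b + Z.of_nat k)%Z -> ok ((a, y), (a, (y + 1)%Z))) ->
  reach ok (a, b) (a, (b + Z.of_nat k)%Z).
Proof.
  revert b; induction k as [|k IH]; intros b Hok.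
  - rewrite Z.add_0_r; constructor.
  - apply reach_step with (a, (b + 1)%Z); [simpl; auto|apply Hok; lia|].
    replace (b + Z.of_nat (S k))%Z with (b + 1 + Z.of_nat k)%Z by lia.
    apply IH; intros y Hy; apply Hok; lia.
Qed.

Lemma reach_north_east (ok : edge -> Prop) a b c d :
  (a <= c)%Z -> (b <= d)%Z ->
  (forall x, (a <= x < c)%Z -> ok ((x, b), ((x + 1)%Z, b))) ->
  (forall y, (b <= y < d)%Z -> ok ((c, y), (c, (y + 1)%Z))) ->
  reach ok (a, b) (c, d).
Proof.
  intros Hac Hbd Hright Hup. apply reach_trans with (c, b).
  - pose proof (reach_right ok (Z.to_nat (c - a)) a b) as R.
    rewrite Z2Nat.id in R by lia. replace (a + (c - a))%Z with c in R by lia.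
    apply R; intros x Hx; apply Hright; lia.
  - pose proof (reach_up ok (Z.to_nat (d - b)) c b) as R.
    rewrite Z2Nat.id in R by lia. replace (b + (d - b))%Z with d in R by lia.
    apply R; intros y Hy; apply Hup; lia.
Qed.

Lemma in_zrange n a : (- Z.of_nat n <= a <= Z.of_nat n)%Z -> In a (zrange n).
Proof.
  intros Ha. apply in_map_iff. exists (Z.to_nat (a + Z.of_nat n)); split.
  - rewrite Z2Nat.id; lia.
  - apply in_seq; lia.
Qed.

Lemma in_box_edges n u v : in_box n u -> lattice_edge (u, v) -> In (u, v) (box_edges n).
Proof.
  destruct u as [a b], v as [c d]; intros [Ha Hb] Hl. apply in_flat_map.
  exists (a, b); split; [apply in_prod; apply in_zrange; auto|].
  destruct Hl as [[-> ->]|[-> ->]]; simpl; auto.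
Qed.

Lemma reach_in_open_box EH n (w : edge -> bool) a b c d :
  (forall e, In e (box_edges n) -> w e = true) ->
  in_box n (a, b) -> in_box n (c, d) -> (a <= c)%Z -> (b <= d)%Z ->
  reach (fun e => openH EH w e /\ in_box n (fst e) /\ in_box n (snd e)) (a, b) (c, d).
Proof.
  intros Hopen [Ha Hb] [Hc Hd] Hac Hbd; simpl in *.
  apply reach_north_east; auto.
  - intros x Hx. assert (Hbox : in_box n (x, b)) by (split; simpl; lia).
    split; [right; apply Hopen, in_box_edges; simpl; auto|].
    split; [|split; simpl]; auto; lia.
  - intros y Hy. assert (Hbox : in_box n (c, y)) by (split; simpl; lia).
    split; [right; apply Hopen, in_box_edges; simpl; auto|].
    split; [|split; simpl]; auto; lia.
Qed.

Lemma reach_restrict (VH : list node) (EH : list edge) (ok : edge -> Prop) v t :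
  (forall e, In e EH -> In (fst e) VH) ->
  (forall e, ok e -> lattice_edge e -> In (snd e) VH -> In e EH) ->
  reach ok v t -> In t VH -> reach (fun e => In e EH) v t.
Proof.
  intros Htail Hok Hr Ht.
  enough (In v VH /\ reach (fun e => In e EH) v t) by tauto.
  induction Hr as [u|u x t Hl Hux _ IH]; [split; [auto|constructor]|].
  destruct (IH Ht) as [Hx Hxt].
  assert (Hin : In (u, x) EH) by (apply Hok; auto).
  split; [apply (Htail _ Hin)|eapply reach_step; eauto].
Qed.

Definition incoming_edges (VH : list node) : list edge :=
  flat_map (fun v => [(((fst v - 1)%Z, snd v), v); ((fst v, (snd v - 1)%Z), v)]) VH.

Lemma in_incoming_edges VH u v : lattice_edge (u, v) -> In v VH -> In (u, v) (incoming_edges VH).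
Proof.
  destruct u as [a b], v as [c d]; intros Hl Hv. apply in_flat_map.
  exists (c, d); split; auto.
  destruct Hl as [[-> ->]|[-> ->]]; simpl; rewrite Z.add_simpl_r; auto.
Qed.

Section DisjointAncestors.

Variables (VH : list node) (EH : list edge) (i j : node).
Hypothesis Hedges : forall e, In e EH -> lattice_edge e /\ In (fst e) VH /\ In (snd e) VH.
Hypotheses (Hi : In i VH) (Hj : In j VH).
Hypothesis Hdisj : ~ exists v, reach (fun e => In e EH) v i /\ reach (fun e => In e EH) v j.

Lemma event_box_not_all_closed n w :
  event_box EH i j n w -> ~ all_closed (incoming_edges VH) w.
Proof.
  intros [v [Hvi Hvj]] Hclosed.
  assert (Htail : forall e, In e EH -> In (fst e) VH) by (intros e He; apply Hedges, He).
  assert (Hok : forall e, openH EH w e /\ in_box n (fst e) /\ in_box n (snd e) ->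
                  lattice_edge e -> In (snd e) VH -> In e EH).
  { intros [u x] [[Hin|Hopen] _] Hl Hx; auto.
    rewrite (Hclosed _ (in_incoming_edges VH u x Hl Hx)) in Hopen; discriminate. }
  apply Hdisj; exists v; split; apply (reach_restrict VH EH _ v _ Htail Hok); assumption.
Qed.

Lemma not_probP_is_one p : 0 <= p < 1 -> ~ probP_is p EH i j 1.
Proof.
  intros Hp [_ Hleast].
  assert (Hc : 0 < (1 - p) ^ length (incoming_edges VH)) by (apply pow_lt; lra).
  enough (1 <= 1 - (1 - p) ^ length (incoming_edges VH)) by lra.
  apply Hleast; intros x [n ->].
  apply cyl_prob_avoid_all_closed_le; [lra|apply event_box_not_all_closed].
Qed.

End DisjointAncestors.

Lemma probP_is_one_at_one EH i j : probP_is 1 EH i j 1.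
Proof.
  split.
  - intros x [n ->]. apply cyl_prob_bounds; lra.
  - intros b Hb. apply Hb.
    destruct i as [i1 i2], j as [j1 j2].
    exists (Z.to_nat (Z.abs i1 + Z.abs i2 + Z.abs j1 + Z.abs j2)).
    symmetry; apply cyl_prob_one; intros w Hopen _.
    exists (Z.min i1 j1, Z.min i2 j2).
    split; apply reach_in_open_box; auto; unfold in_box; simpl; lia.
Qed.

Theorem mainTheorem8 (VH : list node) (EH : list edge) (i j : node)
  (Hedges : forall e, In e EH -> lattice_edge e /\ In (fst e) VH /\ In (snd e) VH)
  (Hi : In i VH) (Hj : In j VH) (Hij : i <> j)
  (Hdisj : ~ exists v, reach (fun e => In e EH) v i /\ reach (fun e => In e EH) v j) :
  pc_is EH i j 1.
Proof.
  split.
  - intros p Hp HP. destruct (Rle_lt_dec 1 p) as [|Hlt]; auto.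
    exfalso; apply (not_probP_is_one VH EH i j Hedges Hi Hj Hdisj p); auto; lra.
  - intros y Hy. apply Hy; [lra|apply probP_is_one_at_one].
Qed.
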